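(* Let $\sigma$ be a $C_0$-nice measure on $\mathbb{C}$ with $0\notin\operatorname{supp}(\sigma)$, let $z\notin\operatorname{supp}(\sigma)$ and set $d_0=\operatorname{dist}(\{0,z\},\operatorname{supp}(\sigma))$. Then $$\int_{\mathbb{C}}\Big|\frac{1}{z-\xi}+\frac1\xi\Big|\,d\sigma(\xi)\le\frac{C(C_0)|z|}{d_0},$$ where $C(C_0)$ depends only on $C_0$.
   Context: $\sigma$ is a positive Borel measure; it is $C_0$-nice if $\sigma(B(w,r))\le C_0r$ for every open disc $B(w,r)$. *)

From HB Require Import structures.
From mathcomp Require Import all_boot all_order all_algebra.
From mathcomp Require Import all_classical all_reals all_analysis.
From mathcomp Require Import complex.

Set Implicit Arguments.
Unset Strict Implicit.
Unset Printing Implicit Defensive.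

Import Order.TTheory GRing.Theory Num.Theory.
Local Open Scope classical_set_scope.
Local Open Scope ring_scope.

(* The complex plane is modelled, as a measurable space, by R * R with the
   product sigma-algebra (which is the Borel sigma-algebra of R^2 = C). *)
Definition toC {R : realType} (p : (R * R)%type) : R[i] := Complex p.1 p.2.

Definition cabs {R : realType} (p : (R * R)%type) : R := Normc.normc (toC p).

Definition disc {R : realType} (w : (R * R)%type) (r : R) : set (R * R)%type :=
  [set xi | Normc.normc (toC xi - toC w) < r].

Definition nice {R : realType} (C0 : R)
  (sigma : {measure set (R * R)%type -> \bar R}) : Prop :=
  forall (w : (R * R)%type) (r : R), 0 < r -> (sigma (disc w r) <= (C0 * r)%:E)%E.

(* Support of sigma: points all of whose open disc neighbourhoods have
   positive measure (complement of the largest open null set). *)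
Definition supp {R : realType}
  (sigma : {measure set (R * R)%type -> \bar R}) : set (R * R)%type :=
  [set w | forall r : R, 0 < r -> (0 < sigma (disc w r))%E].

(* dist({0, z}, S) = inf_{xi in S} min(|xi - 0|, |xi - z|), in \bar R
   (it is +oo when S is empty). *)
Definition dist0z {R : realType} (z : (R * R)%type) (S : set (R * R)%type) : \bar R :=
  ereal_inf [set (Num.min (Normc.normc (toC xi)) (Normc.normc (toC xi - toC z)))%:E
            | xi in S].

From mathcomp Require Import all_boot all_order all_algebra.
From mathcomp Require Import all_classical all_reals all_analysis.
From mathcomp Require Import complex.
From mathcomp Require Import measurable_realfun.
From mathcomp.algebra_tactics Require Import ring lra.
Import Order.TTheory GRing.Theory Num.Theory HBNNSimple.
Local Open Scope classical_set_scope.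
Local Open Scope ring_scope.
Set Implicit Arguments.
Unset Strict Implicit.

(* Since |1/(z - xi) + 1/xi| = |z| / (|z - xi| |xi|), on the dyadic shell
   where m = min(|xi|, |xi - z|) lies in [2^j d0, 2^(j+1) d0) the integrand is
   at most |z| / (4^j d0^2), and that shell lies in the union of the discs of
   radius 2^(j+1) d0 around 0 and z, of sigma-measure at most 2^(j+2) C0 d0.
   Summing over j gives a geometric series of total 8 C0 |z| / d0.  Every
   point of supp sigma lies on some shell, and the complement of the support
   is sigma-null, being covered by countably many null discs with rational
   centres. *)

Section ge0_le_integral_negligible.
Local Open Scope ereal_scope.
Context d (T : measurableType d) (R : realType).
Variable mu : {measure set T -> \bar R}.

(* Unlike [ae_ge0_le_integral], [f] need not be measurable. *)
Lemma ge0_le_integral_negligible (N : set T) (f g : T -> \bar R) :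
  mu.-negligible N -> (forall x, 0 <= f x) -> (forall x, 0 <= g x) ->
  measurable_fun [set: T] g -> (forall x, ~ N x -> f x <= g x) ->
  \int[mu]_x f x <= \int[mu]_x g x.
Proof.
move=> negN f0 g0 mg fg; rewrite ge0_integralTE //.
apply: ge_ereal_sup => _ [h /= hf <-]; rewrite -integralT_nnsfun.
apply: ae_ge0_le_integral => //.
- by move=> x _; rewrite lee_fin.
- exact/measurable_EFinP.
- apply: negligibleS negN => x /= hx; apply: contrapT => Nx; apply: hx => _.
  exact: le_trans (hf x) (fg x Nx).
Qed.

End ge0_le_integral_negligible.

Section disc.
Variable R : realType.
Implicit Types (w xi p : (R * R)%type) (r s : R).

Lemma normc_ge0 (x : R[i]) : 0 <= Normc.normc x.
Proof. by case: x => a b; exact: sqrtr_ge0. Qed.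

Lemma normc_subC w xi :
  Normc.normc (toC w - toC xi) = Normc.normc (toC xi - toC w).
Proof. by rewrite -normcN opprB. Qed.

Lemma normc_lt (a b c : R) : 0 < c -> a ^+ 2 + b ^+ 2 < c ^+ 2 ->
  Normc.normc (Complex a b) < c.
Proof. by move=> c0 h /=; rewrite -(gtr0_norm c0) -sqrtr_sqr ltr_sqrt ?exprn_gt0. Qed.

Lemma measurable_disc w r : measurable (disc w r).
Proof.
pose f xi : R := Num.sqrt ((xi.1 - w.1) ^+ 2 + (xi.2 - w.2) ^+ 2).
have -> : disc w r = setT `&` f @^-1` `]-oo, r[.
  by apply/seteqP; split=> xi; rewrite /= in_itv //= => -[].
apply: (measurableT_comp (continuous_measurable_fun (@sqrt_continuous R))) => //.
by apply: measurable_funD => //; apply/measurable_funX; apply: measurable_funB.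
Qed.

Lemma subset_disc w xi r s : Normc.normc (toC xi - toC w) + s <= r ->
  disc w s `<=` disc xi r.
Proof.
move=> h p ps; change (Normc.normc (toC p - toC xi) < r).
have -> : toC p - toC xi = (toC p - toC w) + (toC w - toC xi) by rewrite addrA subrK.
apply: le_lt_trans (le_normcD _ _) _; rewrite [Normc.normc (_ - toC xi)]normc_subC.
by apply: lt_le_trans h; rewrite [ltRHS]addrC ltrD2r.
Qed.

(* The grid of mesh 1/(k+1) is indexed by naturals, shifted by B so that
   [grid_disc B _ _ _] covers the square [-B, B)^2. *)
Definition grid_disc (B k m n : nat) : set (R * R)%type :=
  disc (m%:R / k.+1%:R - B%:R, n%:R / k.+1%:R - B%:R) (2 / k.+1%:R).

Lemma grid_approx (x K : R) (B : nat) : 0 < K -> `|x| < B%:R ->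
  exists m : nat, 0 <= x - (m%:R / K - B%:R) < K^-1.
Proof.
move=> K0 xB; have xB0 : 0 <= (x + B%:R) * K.
  by apply: mulr_ge0 (ltW K0); have := ler_norm (- x); rewrite normrN; lra.
have /andP[lo hi] := truncn_itv xB0; rewrite -natr1 in hi.
exists (Num.truncn ((x + B%:R) * K)); set m := Num.truncn _ in lo hi *.
have -> : x - (m%:R / K - B%:R) = ((x + B%:R) * K - m%:R) * K^-1.
  by field; rewrite gt_eqF.
rewrite pmulr_lge0 ?invr_gt0 // -[X in _ < X]mul1r ltr_pM2r ?invr_gt0 //.
by apply/andP; split; lra.
Qed.

Lemma grid_disc_subset xi r : 0 < r ->
  exists B k m n, grid_disc B k m n xi /\ grid_disc B k m n `<=` disc xi r.
Proof.
move=> r0; pose B := (Num.truncn (`|xi.1| + `|xi.2|)).+1.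
pose k := Num.truncn (4 / r); pose K : R := k.+1%:R.
have K0 : 0 < K by rewrite ltr0n.
have xiB : `|xi.1| + `|xi.2| < B%:R by exact: truncnS_gt.
have kr : 4 / K < r.
  have : 4 / r < K by exact: truncnS_gt.
  by rewrite !ltr_pdivrMr // mulrC.
have [m /andP[m0 m1]] : exists m : nat, 0 <= xi.1 - (m%:R / K - B%:R) < K^-1.
  by apply: grid_approx => //; have := normr_ge0 xi.2; lra.
have [n /andP[n0 n1]] : exists n : nat, 0 <= xi.2 - (n%:R / K - B%:R) < K^-1.
  by apply: grid_approx => //; have := normr_ge0 xi.1; lra.
have xi_near : Normc.normc (toC xi - toC (m%:R / K - B%:R, n%:R / K - B%:R)) < 2 / K.
  apply: normc_lt; first by rewrite divr_gt0.
  have -> : (2 / K) ^+ 2 = 4 * (K^-1 * K^-1) by field; rewrite gt_eqF.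
  have sq (a : R) : 0 <= a -> a < K^-1 -> a * a < K^-1 * K^-1.
    move=> a0 a1; apply: le_lt_trans (ler_wpM2l a0 (ltW a1)) _.
    by rewrite ltr_pM2r ?invr_gt0.
  have e0 : 0 < K^-1 * K^-1 by rewrite mulr_gt0 ?invr_gt0.
  have sum4 (a b e : R) : 0 < e -> a < e -> b < e -> a + b < 4 * e by lra.
  by rewrite !expr2; apply: sum4 e0 (sq _ m0 m1) (sq _ n0 n1).
exists B, k, m, n; split => //.
apply: subset_disc; rewrite -/K; clearbody K; lra.
Qed.

End disc.

Section support.
Variables (R : realType) (sigma : {measure set (R * R)%type -> \bar R}).
Implicit Types (w p : (R * R)%type) (r s : R).

Lemma not_supp_disc0 w : ~ supp sigma w -> exists2 r : R, 0 < r & sigma (disc w r) = 0%E.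
Proof.
move=> nw; apply: contrapT => hn; apply: nw => r r0.
rewrite lt_neqAle measure_ge0 andbT eq_sym; apply/eqP => null; apply: hn.
by exists r.
Qed.

Lemma measure_disc0_subset w r p s : sigma (disc w r) = 0%E ->
  disc p s `<=` disc w r -> sigma (disc p s) = 0%E.
Proof.
move=> null sub; apply/eqP; rewrite eq_le measure_ge0 andbT -null.
by apply: le_measure => //; rewrite inE; exact: measurable_disc.
Qed.

Lemma supp_disc0_le w r p : sigma (disc w r) = 0%E -> supp sigma p ->
  r <= Normc.normc (toC p - toC w).
Proof.
move=> null sp; rewrite leNgt; apply/negP => lt_r.
have := sp (r - Normc.normc (toC p - toC w)); rewrite subr_gt0 => /(_ lt_r).
rewrite (measure_disc0_subset null) ?ltxx //; apply: subset_disc.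
by rewrite normc_subC addrC subrK.
Qed.

Lemma negligible_not_supp : sigma.-negligible (~` supp sigma).
Proof.
pose F (B k m n : nat) : set (R * R)%type :=
  if sigma (grid_disc B k m n) == 0%E then grid_disc B k m n else set0.
have : sigma.-negligible (\bigcup_B \bigcup_k \bigcup_m \bigcup_n F B k m n).
  apply: negligible_bigcup => B; apply: negligible_bigcup => k.
  apply: negligible_bigcup => m; apply: negligible_bigcup => n.
  rewrite /F; case: ifP => [/eqP null|_]; last exact: negligible_set0.
  by exists (grid_disc B k m n); split => //; exact: measurable_disc.
apply: negligibleS => xi /not_supp_disc0 [r r0 null].
have [B [k [m [n [xi_in sub]]]]] := grid_disc_subset xi r0.
exists B => //; exists k => //; exists m => //; exists n => //.
by rewrite /F (measure_disc0_subset null sub) eqxx.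
Qed.

Lemma nice_ge0 C0 : nice C0 sigma -> 0 <= C0.
Proof.
move=> hn; have := le_trans (measure_ge0 sigma (disc (0, 0) 1)) (hn (0, 0) 1 ltr01).
by rewrite lee_fin mulr1.
Qed.

End support.

Section dist0z.
Variable R : realType.
Implicit Types (z p : (R * R)%type) (S : set (R * R)%type) (d r : R).

Lemma dist0z_le z S d p : dist0z z S = d%:E -> S p ->
  d <= Num.min (Normc.normc (toC p)) (Normc.normc (toC p - toC z)).
Proof. by move=> hd Sp; rewrite -lee_fin -hd; apply: ereal_inf_lbound; exists p. Qed.

Lemma dist0z_ge z S d r : dist0z z S = d%:E ->
  (forall p, S p -> r <= Num.min (Normc.normc (toC p)) (Normc.normc (toC p - toC z))) ->
  r <= d.
Proof.
move=> hd lb; rewrite -lee_fin -hd; apply: le_ereal_inf_tmp => _ [p Sp <-].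
by rewrite lee_fin; exact: lb.
Qed.

End dist0z.

Section cauchy_kernel.
Variable R : realType.

Lemma normc_cauchy_kernel (a b : R[i]) : b != 0 -> a != b ->
  Normc.normc ((a - b)^-1 + b^-1) =
  Normc.normc a / (Normc.normc b * Normc.normc (b - a)).
Proof.
move=> b0 ab; have ab0 : a - b != 0 by rewrite subr_eq0.
have -> : (a - b)^-1 + b^-1 = a / ((a - b) * b) by field; rewrite ab0 b0.
rewrite Normc.normcM Normc.normcV Normc.normcM; congr (_ / _).
by rewrite mulrC -[Normc.normc (a - b)]normcN opprB.
Qed.

Lemma cauchy_kernel_le_min (a b : R[i]) :
  let m := Num.min (Normc.normc b) (Normc.normc (b - a)) in
  0 < m -> Normc.normc ((a - b)^-1 + b^-1) <= Normc.normc a / m ^+ 2.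
Proof.
move=> m m0; have /andP[b0 ba0] : (0 < Normc.normc b) && (0 < Normc.normc (b - a)).
  by rewrite -lt_min.
have nz (c : R[i]) : 0 < Normc.normc c -> c != 0.
  by apply: contraTneq => ->; rewrite Normc.normc0 ltxx.
have ab : a != b by rewrite eq_sym -subr_eq0 nz.
rewrite normc_cauchy_kernel ?nz //; apply: ler_wpM2l; first exact: normc_ge0.
rewrite expr2 lef_pV2 ?posrE ?mulr_gt0 //.
by apply: ler_pM;
  [exact: ltW | exact: ltW | rewrite ge_min lexx | rewrite ge_min lexx orbT].
Qed.

Lemma dyadic_shell (t del : R) : 0 < del -> del <= t ->
  exists j : nat, 2 ^+ j * del <= t < 2 ^+ j.+1 * del.
Proof.
move=> del0 dt; have ex : exists j, t < 2 ^+ j.+1 * del.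
  exists (Num.truncn (t / del)); rewrite -ltr_pdivrMr //.
  apply: lt_le_trans (truncnS_gt _) _.
  by rewrite -natrX ler_nat ltnW // ltn_expl.
case: (ex_minnP ex) => j tj jmin; exists j; rewrite tj andbT.
case: j tj jmin => [|j] _ jmin; first by rewrite expr0 mul1r.
by rewrite leNgt; apply/negP => /jmin; rewrite ltnn.
Qed.

Definition dyadic_bound (z : (R * R)%type) (del : R) (j : nat) (xi : (R * R)%type) : R :=
  cabs z / (2 ^+ j * del) ^+ 2 *
  (\1_(disc (0, 0) (2 ^+ j.+1 * del)) xi + \1_(disc z (2 ^+ j.+1 * del)) xi).

Lemma dyadic_bound_ge0 z del j xi : 0 <= dyadic_bound z del j xi.
Proof.
by rewrite mulr_ge0 ?addr_ge0 ?divr_ge0 ?normc_ge0 ?sqr_ge0 // indicE ler0n.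
Qed.

Lemma measurable_dyadic_bound z del j : measurable_fun setT (dyadic_bound z del j).
Proof.
apply: measurable_funM => //.
by apply: measurable_funD; apply: measurable_indic; exact: measurable_disc.
Qed.

Lemma kernel_le_dyadic_bound z xi del : 0 < del ->
  del <= Num.min (Normc.normc (toC xi)) (Normc.normc (toC xi - toC z)) ->
  exists j,
    Normc.normc ((toC z - toC xi)^-1 + (toC xi)^-1) <= dyadic_bound z del j xi.
Proof.
set m := Num.min _ _ => del0 dm; have m0 : 0 < m := lt_le_trans del0 dm.
have [j /andP[jlo jhi]] := dyadic_shell del0 dm; exists j.
have ind1 : 1 <= \1_(disc (0, 0) (2 ^+ j.+1 * del)) xi
                 + \1_(disc z (2 ^+ j.+1 * del)) xi :> R.
  move: jhi; rewrite gt_min => /orP[xi0|xiz]; rewrite !indicE.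
    have xi_in : disc (0, 0) (2 ^+ j.+1 * del) xi.
      by change (Normc.normc (toC xi - 0) < 2 ^+ j.+1 * del); rewrite subr0.
    by rewrite (mem_set xi_in) lerDl ler0n.
  by rewrite (mem_set (xiz : disc z _ xi)) lerDr ler0n.
apply: le_trans (cauchy_kernel_le_min m0) _.
rewrite /dyadic_bound -[X in X <= _]mulr1; apply: ler_pM => //.
- by rewrite divr_ge0 ?normc_ge0 ?sqr_ge0.
- apply: ler_wpM2l; first exact: normc_ge0.
  rewrite lef_pV2 ?posrE ?exprn_gt0 ?mulr_gt0 ?exprn_gt0 //.
  by rewrite lerXn2r ?nnegrE ?(ltW m0) ?mulr_ge0 ?exprn_ge0 ?(ltW del0).
Qed.

End cauchy_kernel.

Section nice_integral.
Variables (R : realType) (C0 : R) (sigma : {measure set (R * R)%type -> \bar R}).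
Hypothesis sigma_nice : nice C0 sigma.

Lemma integral_two_discs_le (w1 w2 : (R * R)%type) (r c : R) : 0 < r -> 0 <= c ->
  (\int[sigma]_x (c * (\1_(disc w1 r) x + \1_(disc w2 r) x))%:E
    <= (c * (2 * C0 * r))%:E)%E.
Proof.
move=> r0 c0; have mi w : measurable_fun setT (fun x => (\1_(disc w r) x : R)%:E).
  by apply/measurable_EFinP; apply: measurable_indic; exact: measurable_disc.
rewrite (eq_integral
  (fun x => c%:E * ((\1_(disc w1 r) x : R)%:E + (\1_(disc w2 r) x : R)%:E))%E);
  last by move=> x _; rewrite EFinM EFinD.
rewrite ge0_integralZl ?lee_fin //; last 2 first.
- exact: emeasurable_funD.
- by move=> x _; apply: adde_ge0.
rewrite ge0_integralD // !integral_indic ?setIT //; try exact: measurable_disc.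
rewrite EFinM lee_wpmul2l ?lee_fin // -mulrA mulr_natl mulr2n EFinD.
by apply: leeD; exact: sigma_nice.
Qed.

Lemma integral_dyadic_bound_le z del j : 0 < del ->
  (\int[sigma]_x (dyadic_bound z del j x)%:E
    <= (8 * C0 * cabs z / del / (2 ^ (j + 1))%:R)%:E)%E.
Proof.
move=> del0; apply: le_trans (integral_two_discs_le _ _ _ _) _.
- by rewrite mulr_gt0 ?exprn_gt0.
- by rewrite divr_ge0 ?normc_ge0 ?sqr_ge0.
rewrite lee_fin le_eqVlt; apply/orP; left; apply/eqP.
rewrite addn1 natrX !(exprS 2 j); have : 2 ^+ j != 0 :> R by rewrite expf_neq0.
by move: (2 ^+ j) => t t0; field; rewrite t0 gt_eqF.
Qed.

End nice_integral.

Theorem mainTheorem7 (R : realType) (C0 : R) :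
  exists C : R,
  forall (sigma : {measure set (R * R)%type -> \bar R}) (z : (R * R)%type) (d0 : R),
    nice C0 sigma ->
    ~ supp sigma (0, 0) ->
    ~ supp sigma z ->
    dist0z z (supp sigma) = d0%:E ->
    (\int[sigma]_xi
        (Normc.normc ((toC z - toC xi)^-1 + (toC xi)^-1))%:E
      <= (C * cabs z / d0)%:E)%E.
Proof.
exists (8 * C0) => sigma z d0 hn h0 hz hd.
have [r0 r0_gt0 null0] := not_supp_disc0 h0.
have [rz rz_gt0 nullz] := not_supp_disc0 hz.
have d0_gt0 : 0 < d0.
  apply: (@lt_le_trans _ _ (Num.min r0 rz)); first by rewrite lt_min r0_gt0.
  apply: (dist0z_ge (r := Num.min r0 rz) hd) => p sp.
  have := supp_disc0_le null0 sp; have := supp_disc0_le nullz sp.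
  change (toC (0, 0)) with (0 : R[i]); rewrite subr0 le_min !ge_min => -> ->.
  by rewrite orbT.
have b_ge0 j x : (0 <= (dyadic_bound z d0 j x)%:E)%E by rewrite lee_fin dyadic_bound_ge0.
have mb j : measurable_fun setT (fun x => (dyadic_bound z d0 j x)%:E).
  by apply/measurable_EFinP; exact: measurable_dyadic_bound.
apply: (@le_trans _ _ (\sum_(j <oo) \int[sigma]_x (dyadic_bound z d0 j x)%:E)%E).
  rewrite -integral_nneseries //.
  apply: ge0_le_integral_negligible (negligible_not_supp sigma) _ _ _ _.
  - by move=> x; rewrite lee_fin normc_ge0.
  - by move=> x; apply: nneseries_ge0.
  - by apply: ge0_emeasurable_sum => // *; exact: b_ge0.
  move=> x /contrapT sx; have [j kj] := kernel_le_dyadic_bound d0_gt0 (dist0z_le hd sx).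
  rewrite (nneseriesD1 (n := j)) //; apply: (le_trans _ (leeDl _ _)).
  - by rewrite lee_fin.
  - exact: nneseries_ge0.
apply: le_trans (lee_nneseries _ (fun j _ => integral_dyadic_bound_le hn z j d0_gt0)) _.
  by move=> j _ _; apply: integral_ge0.
by rewrite (cvg_lim _ (cvg_geometric_eseries_half (n := 0))) // expr0 divr1.
Qed.
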